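(* Let $\eta\in D$ with $|\eta|=|i|$ and let $a_1\in\mathcal{O}_D^*$ be a pure quaternion. Then $T\big(2(\eta a_1\bar\eta)^{-1}a_1\big)\in\pi\mathcal{O}_k$.
   Context: $k$ is a dyadic local field of characteristic $0$ with ring of integers $\mathcal{O}_k$ and uniformizer $\pi$; $\Delta\in\mathcal{O}_k^*$ is a unit of minimal quadratic defect. $D=\left(\frac{\pi,\Delta}{k}\right)$ is the quaternion division algebra with basis $1,i,j,ij$, $i^2=\pi$, $j^2=\Delta$, $ij=-ji$; $q\mapsto\bar q$ is the canonical involution, $N$ the reduced norm, $T$ the reduced trace, $|q|:=|N(q)|_k$, and $\mathcal{O}_D=\{q:|q|\le1\}$. A pure quaternion is $q$ with $\bar q=-q$. *)

From HB Require Import structures.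
From mathcomp Require Import all_boot all_order all_algebra.
Set Implicit Arguments. Unset Strict Implicit. Unset Printing Implicit Defensive.
Import Order.TTheory GRing.Theory Num.Theory.
Local Open Scope ring_scope.

Section Local.
Variable k : fieldType.
Variable v : k -> int.   (* discrete valuation, meaningful on nonzero elements *)

Definition inO (x : k) : Prop := x = 0 \/ 0 <= v x.

Definition in_ideal (a x : k) : Prop := exists c, inO c /\ x = a * c.

(** |x|_k = |y|_k  (for the normalized absolute value |x| = q^(-v x), |0| = 0) *)
Definition abs_eq (x y : k) : Prop :=
  (x = 0 /\ y = 0) \/ [/\ x != 0, y != 0 & v x = v y].

(** (k, v) is a non-archimedean local field of characteristic 0 which is dyadic:
    v is a normalized discrete valuation, k is complete for it, the residue
    field O_k / pi O_k is finite, char k = 0 and v 2 > 0. *)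
Definition dyadic_local_field : Prop :=
  (forall x y, x != 0 -> y != 0 -> v (x * y) = v x + v y) /\
      (forall x y, x != 0 -> y != 0 -> x + y != 0 ->
                    Num.min (v x) (v y) <= v (x + y)) /\
      (forall n : int, exists x, x != 0 /\ v x = n) /\
      (forall u : nat -> k,
         (forall N : int, exists m, forall p q, (m <= p)%N -> (m <= q)%N ->
              u p - u q = 0 \/ N <= v (u p - u q)) ->
         exists l, forall N : int, exists m, forall p, (m <= p)%N ->
              u p - l = 0 \/ N <= v (u p - l)) /\
      (exists s : seq k, (forall y, y \in s -> inO y) /\
         forall x, inO x -> exists2 y, y \in s & (x - y = 0 \/ 1 <= v (x - y))) /\
      (forall n : nat, n.+1%:R != 0 :> k) /\
      0 < v 2.

(** Delta is a unit of minimal quadratic defect: d(Delta) = 4 O_k, where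
    d(Delta) = \bigcap_{x in k} (Delta - x^2) O_k. *)
Definition min_quad_defect_unit (Delta : k) : Prop :=
  [/\ Delta != 0, v Delta = 0 &
      forall y, (forall x, in_ideal (Delta - x ^+ 2) y) <-> in_ideal 4 y].

(** Quaternions a + b i + c j + d ij over k, with i^2 = pi, j^2 = Delta, ij = -ji. *)
Record quat := Quat { q0 : k; q1 : k; q2 : k; q3 : k }.

Variables (pi Delta : k).

Definition qmul (x y : quat) : quat :=
  let: Quat a1 b1 c1 d1 := x in let: Quat a2 b2 c2 d2 := y in
  Quat (a1 * a2 + pi * b1 * b2 + Delta * c1 * c2 - pi * Delta * d1 * d2)
       (a1 * b2 + b1 * a2 - Delta * c1 * d2 + Delta * d1 * c2)
       (a1 * c2 + c1 * a2 + pi * b1 * d2 - pi * d1 * b2)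
       (a1 * d2 + d1 * a2 + b1 * c2 - c1 * b2).

Definition qscal (r : k) (x : quat) : quat :=
  Quat (r * q0 x) (r * q1 x) (r * q2 x) (r * q3 x).

Definition qopp (x : quat) : quat := qscal (-1) x.

Definition qconj (x : quat) : quat := Quat (q0 x) (- q1 x) (- q2 x) (- q3 x).

(** reduced norm  N(q) = q * conj q *)
Definition qnorm (x : quat) : k :=
  q0 x ^+ 2 - pi * q1 x ^+ 2 - Delta * q2 x ^+ 2 + pi * Delta * q3 x ^+ 2.

(** reduced trace  T(q) = q + conj q *)
Definition qtrace (x : quat) : k := 2 * q0 x.

Definition qinv (x : quat) : quat := qscal (qnorm x)^-1 (qconj x).

Definition qi : quat := Quat 0 1 0 0.
Definition qcst (r : k) : quat := Quat r 0 0 0.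

Definition is_division : Prop := forall x, qnorm x = 0 -> x = Quat 0 0 0 0.

Definition pure (x : quat) : Prop := qconj x = qopp x.

(** O_D = { q : |q| <= 1 } and its units *)
Definition inOD (x : quat) : Prop := inO (qnorm x).
Definition unitOD (x : quat) : Prop :=
  [/\ x <> Quat 0 0 0 0, inOD x & inOD (qinv x)].

End Local.

(* Split N(q) = (a^2 - Delta c^2) - pi (b^2 - Delta d^2) for q = a + bi + cj + dij.
   Since Delta has minimal quadratic defect, the norm form s^2 - Delta t^2 takes
   only even valuations and v(s^2 - Delta t^2) <= 2 v(2s); so v(N q) is the
   minimum of the valuations of the two parts, and v(N q) <= 2 v(2 q0) when
   q0 != 0.  For q = eta a conj(eta) we have
   T(2 q^-1 a) = 4 q0(conj(q) a) / (N(eta)^2 N(a)), so we need v(4 q0(conj(q) a)) >= 3.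
   Choose an integral scalar dl = c x0, with v(Delta - x0^2) = 2 v(2), such that
   N(a - dl) lies in pi O_k.  Then q0(conj(q) a) = q0(z) - dl^2 N(eta) where
   N(z) = N(eta)^2 N(a - dl)^2 has valuation >= 4, hence v(2 q0(z)) >= 2. *)

From HB Require Import structures.
From mathcomp Require Import all_boot all_order all_algebra zify ring.
From Stdlib Require Import Classical.
Set Implicit Arguments. Unset Strict Implicit. Unset Printing Implicit Defensive.
Import Order.TTheory GRing.Theory Num.Theory.
Local Open Scope ring_scope.

Section QuaternionIdentities.
Variables (k : fieldType) (pi Delta : k).
Local Notation qm := (qmul pi Delta).
Local Notation N := (qnorm pi Delta).

Definition normD (s t : k) : k := s ^+ 2 - Delta * t ^+ 2.

Lemma qnorm_split (z : quat k) :
  N z = normD (q0 z) (q2 z) - pi * normD (q1 z) (q3 z).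
Proof. by case: z => z0 z1 z2 z3; rewrite /qnorm /normD /=; ring. Qed.

Lemma qnormM (x y : quat k) : N (qm x y) = N x * N y.
Proof.
by case: x => x0 x1 x2 x3; case: y => y0 y1 y2 y3; rewrite /qnorm /=; ring.
Qed.

Lemma qnorm_conj (x : quat k) : N (qconj x) = N x.
Proof. by case: x => x0 x1 x2 x3; rewrite /qnorm /=; ring. Qed.

Lemma qnormZ (r : k) (x : quat k) : N (qscal r x) = r ^+ 2 * N x.
Proof. by case: x => x0 x1 x2 x3; rewrite /qnorm /=; ring. Qed.

Lemma qnorm_qi : N (qi k) = - pi.
Proof. by rewrite /qnorm /=; ring. Qed.

Lemma qnorm_qinv (x : quat k) : N (qinv pi Delta x) = (N x)^-1.
Proof.
rewrite /qinv qnormZ qnorm_conj.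
have [->|xn] := eqVneq (N x) 0; first by rewrite mulr0 invr0.
by rewrite expr2 -mulrA mulVf ?mulr1.
Qed.

Lemma qtrace_scal2_qinv (x y : quat k) :
  qtrace (qm (qscal 2 (qinv pi Delta x)) y) = 4 * (N x)^-1 * q0 (qm (qconj x) y).
Proof.
by case: x => x0 x1 x2 x3; case: y => y0 y1 y2 y3; rewrite /qtrace /qinv /=; ring.
Qed.

Lemma q0_pure (a : quat k) : (2 : k) != 0 -> pure a -> q0 a = 0.
Proof.
move=> n2 /(congr1 (@q0 k)) /= ha.
have : 2 * q0 a = 0 by rewrite -[RHS](subrr (q0 a)) {3}ha; ring.
by move/eqP; rewrite mulf_eq0 (negbTE n2) => /eqP.
Qed.

(* Since a is pure, conj(e a ē) = e Ā ē + dl N(e) with A = a - dl;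
   expand in a = A + dl. *)
Lemma q0_conjugate_shift (e : quat k) (b c d dl : k) :
  let a := Quat 0 b c d in let A := Quat (- dl) b c d in
  q0 (qm (qconj (qm (qm e a) (qconj e))) a)
  = q0 (qm (qm (qm e (qconj A)) (qconj e)) A) - dl ^+ 2 * N e.
Proof. by case: e => e0 e1 e2 e3; rewrite /qnorm /=; ring. Qed.

End QuaternionIdentities.

Section Valuation.
Variables (k : fieldType) (v : k -> int).
Hypothesis valM : forall {x y : k}, x != 0 -> y != 0 -> v (x * y) = v x + v y.
Hypothesis val_add : forall {x y : k}, x != 0 -> y != 0 -> x + y != 0 ->
  Num.min (v x) (v y) <= v (x + y).

(* [lia] treats occurrences of [v 2] elaborated through different ring
   structures as distinct atoms; [set] identifies them up to conversion. *)
Ltac val_lia :=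
  repeat match goal with H : context [v _] |- _ => revert H end;
  repeat match goal with |- context [v ?a] =>
    let t := fresh "t" in set t := v a; clearbody t end;
  intros; lia.

(* [x] is divisible by [pi ^ m]; [v] is junk at [0]. *)
Definition val_ge (m : int) (x : k) : Prop := x = 0 \/ m <= v x.

Lemma val1 : v 1 = 0.
Proof. by have := valM (oner_neq0 k) (oner_neq0 k); rewrite mulr1; set a := v 1; lia. Qed.

Lemma valN x : v (- x) = v x.
Proof.
have nN1 : (-1 : k) != 0 by rewrite oppr_eq0 oner_eq0.
have vN1 : v (-1) = 0 by have := valM nN1 nN1; rewrite mulrNN mulr1 val1; lia.
have [->|xn] := eqVneq x 0; first by rewrite oppr0.
by rewrite -mulN1r valM // vN1 add0r.
Qed.

Lemma valX x n : x != 0 -> v (x ^+ n) = n%:Z * v x.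
Proof.
move=> xn; elim: n => [|n IHn]; first by rewrite expr0 val1 mul0r.
by rewrite exprS valM ?expf_neq0 // IHn intS mulrDl mul1r.
Qed.

Lemma valV x : x != 0 -> v x^-1 = - v x.
Proof. by move=> xn; have := valM xn (invr_neq0 xn); rewrite mulfV // val1; lia. Qed.

Lemma val_ge_le m n x : m <= n -> val_ge n x -> val_ge m x.
Proof. by move=> mn [->|h]; [left | right; lia]. Qed.

Lemma val_geN m x : val_ge m x -> val_ge m (- x).
Proof. by case=> [->|h]; [left; rewrite oppr0 | right; rewrite valN]. Qed.

Lemma val_geM m n x y : val_ge m x -> val_ge n y -> val_ge (m + n) (x * y).
Proof.
case=> [->|hx]; first by left; rewrite mul0r.
case=> [->|hy]; first by left; rewrite mulr0.
have [->|xn] := eqVneq x 0; first by left; rewrite mul0r.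
have [->|yn] := eqVneq y 0; first by left; rewrite mulr0.
by right; rewrite valM //; lia.
Qed.

Lemma val_geD m x y : val_ge m x -> val_ge m y -> val_ge m (x + y).
Proof.
case=> [->|hx]; first by rewrite add0r.
case=> [->|hy]; first by rewrite addr0; right.
have [->|xn] := eqVneq x 0; first by rewrite add0r; right.
have [->|yn] := eqVneq y 0; first by rewrite addr0; right.
have [->|sn] := eqVneq (x + y) 0; first by left.
by right; have := val_add xn yn sn; rewrite ge_min => /orP[]; lia.
Qed.

Lemma val_ge_val x : val_ge (v x) x.
Proof. by right. Qed.

Lemma val_addl_lt n x y : y != 0 -> val_ge n x -> v y < n ->
  x + y != 0 /\ v (x + y) = v y.
Proof.
move=> yn [->|hx] lt; first by rewrite add0r.
have [->|xn] := eqVneq x 0; first by rewrite add0r.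
have sn : x + y != 0.
  apply: contraTneq lt => /eqP; rewrite addr_eq0 => /eqP ex.
  by move: hx; rewrite ex valN; lia.
have nxn : - x != 0 by rewrite oppr_eq0.
have := val_add xn yn sn; have := val_add nxn sn; rewrite addKr valN !ge_min.
by move=> /(_ yn) /orP[] h1 /orP[] h2; split=> //; lia.
Qed.

Lemma val_add_neq x y : x != 0 -> y != 0 -> v x != v y ->
  x + y != 0 /\ v (x + y) = Num.min (v x) (v y).
Proof.
move=> xn yn; case: ltgtP => // h _.
- by rewrite addrC; have [-> ->] := val_addl_lt xn (val_ge_val y) h; split=> //; lia.
- by have [-> ->] := val_addl_lt yn (val_ge_val x) h; split=> //; lia.
Qed.

Lemma in_idealP a x : a != 0 -> in_ideal v a x <-> val_ge (v a) x.
Proof.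
move=> an; split=> [[c [hc ->]]|hx].
  by rewrite -[v a]addr0; apply: val_geM (val_ge_val a) hc.
exists (a^-1 * x); split; last by rewrite mulVKf.
by rewrite /inO -(addNr (v a)) -valV //; apply: val_geM (val_ge_val _) hx.
Qed.

Let four_eq : (4 : k) = 2 * 2. Proof. by rewrite -natrM. Qed.

Lemma val4 : (2 : k) != 0 -> v 4 = 2 * v 2.
Proof. by move=> n2; rewrite four_eq valM //; lia. Qed.

Section MinimalQuadraticDefect.
Variable Delta : k.
Hypothesis n2 : (2 : k) != 0.
Hypothesis defect4 :
  forall y, (forall x, in_ideal v (Delta - x ^+ 2) y) <-> in_ideal v 4 y.

Let n4 : (4 : k) != 0.
Proof. by rewrite four_eq mulf_neq0. Qed.

Lemma min_quad_defect_le x : Delta - x ^+ 2 != 0 /\ v (Delta - x ^+ 2) <= 2 * v 2.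
Proof.
have /(_ x) : forall x, in_ideal v (Delta - x ^+ 2) 4.
  by apply/defect4/in_idealP => //; apply: val_ge_val.
have [->|dn] := eqVneq (Delta - x ^+ 2) 0.
  by case=> c [_ e4]; move: n4; rewrite e4 mul0r eqxx.
rewrite in_idealP // -val4 //; case=> [/eqP|]; first by rewrite (negbTE n4).
by split.
Qed.

Lemma min_quad_defect_attained :
  (forall n : int, exists x, x != 0 /\ v x = n) ->
  exists x0, 2 * v 2 <= v (Delta - x0 ^+ 2).
Proof.
move=> val_surj; apply: NNPP => none.
have [y [yn vy]] := val_surj (2 * v 2 - 1).
have : in_ideal v 4 y.
  apply/defect4 => x; have [dn le] := min_quad_defect_le x.
  rewrite in_idealP //; right; rewrite vy.
  have : ~ 2 * v 2 <= v (Delta - x ^+ 2) by move=> h; apply: none; exists x.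
  lia.
by rewrite in_idealP // val4 // => -[/eqP|]; [rewrite (negbTE yn) | lia].
Qed.

End MinimalQuadraticDefect.

Section NormForm.
Variable Delta : k.
Hypothesis n2 : (2 : k) != 0.
Hypothesis val2 : 0 < v 2.
Hypothesis vDelta : v Delta = 0.
Hypothesis defect_le :
  forall x, Delta - x ^+ 2 != 0 /\ v (Delta - x ^+ 2) <= 2 * v 2.
Hypothesis defect_attained : exists x0, 2 * v 2 <= v (Delta - x0 ^+ 2).

Lemma val_Delta_sub_sq_neg x : x != 0 -> v x < 0 -> v (Delta - x ^+ 2) = 2 * v x.
Proof.
move=> xn lt; have x2n : - x ^+ 2 != 0 by rewrite oppr_eq0 expf_neq0.
have hD : val_ge 0 Delta by right; rewrite vDelta.
have [_ ->] := val_addl_lt x2n hD ltac:(rewrite valN valX //; lia).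
by rewrite valN valX.
Qed.

Lemma Delta_sub_sq_integral x : 0 < v (Delta - x ^+ 2) -> val_ge 0 x.
Proof.
have [->|xn] := eqVneq x 0; first by left.
by case: (ltP (v x) 0) => h; [rewrite val_Delta_sub_sq_neg //; lia | right].
Qed.

Lemma val_Delta_sub_sq_even x : exists e, v (Delta - x ^+ 2) = 2 * e.
Proof.
have [x0 hx0] := defect_attained; have [dn le] := defect_le x.
have [d0n _] := defect_le x0.
set m := v (Delta - x ^+ 2) in le *.
have [->|ne] := eqVneq m (2 * v 2); first by exists (v 2).
have x0i : val_ge 0 x0 by apply: Delta_sub_sq_integral; val_lia.
have h2x0 : val_ge (v 2) (2 * x0).
  by rewrite -[v 2]addr0; apply: val_geM (val_ge_val 2) x0i.
(* If [m < 2 v 2], then [m = v((x - x0) (x + x0)) = 2 v(x - x0)]. *)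
set w := x - x0.
have ew : (Delta - x0 ^+ 2) + - (Delta - x ^+ 2) = w * (w + 2 * x0) by rewrite /w; ring.
have mn : - (Delta - x ^+ 2) != 0 by rewrite oppr_eq0.
have [pn vp] := val_addl_lt mn (or_intror hx0) ltac:(rewrite valN; lia).
rewrite ew valN -/m in pn vp.
have [wn w2n] : w != 0 /\ w + 2 * x0 != 0 by apply/andP; rewrite -negb_or -mulf_eq0.
rewrite valM // in vp.
case: (ltP (v w) (v 2)) => hw.
  have [_ e] := val_addl_lt wn h2x0 hw.
  by exists (v w); move: vp; rewrite [w + _]addrC e; lia.
case: (val_geD (val_ge_le hw (val_ge_val w)) h2x0) => [/eqP|h].
  by rewrite (negbTE w2n).
val_lia.
Qed.

Lemma val_Delta_sub_sq_le x : x != 0 -> v (Delta - x ^+ 2) <= 2 * v (2 * x).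
Proof.
move=> xn; rewrite valM //; case: (ltP (v x) 0) => h.
  by rewrite val_Delta_sub_sq_neg //; val_lia.
by have [_ le] := defect_le x; val_lia.
Qed.

Lemma normD_Delta_sub_sq s t : t != 0 ->
  normD Delta s t = - t ^+ 2 * (Delta - (s / t) ^+ 2).
Proof. by move=> tn; rewrite /normD; field. Qed.

Lemma normD_neq0 s t : s != 0 -> normD Delta s t != 0.
Proof.
move=> sn; have [->|tn] := eqVneq t 0.
  by rewrite /normD expr0n /= mulr0 subr0 expf_neq0.
rewrite normD_Delta_sub_sq // mulf_neq0 ?oppr_eq0 ?expf_neq0 //.
by case: (defect_le (s / t)).
Qed.

Lemma normD_even s t : normD Delta s t != 0 ->
  exists e, v (normD Delta s t) = 2 * e.
Proof.
have [->|tn] := eqVneq t 0.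
  rewrite /normD expr0n /= mulr0 subr0 => s2n.
  have sn : s != 0 by apply: contraNneq s2n => ->; rewrite expr0n.
  by exists (v s); rewrite valX.
rewrite normD_Delta_sub_sq // => _.
have [e he] := val_Delta_sub_sq_even (s / t); have [dn _] := defect_le (s / t).
by exists (v t + e); rewrite valM ?oppr_eq0 ?expf_neq0 // valN valX // he; lia.
Qed.

Lemma normD_le s t : s != 0 -> v (normD Delta s t) <= 2 * v (2 * s).
Proof.
move=> sn; have [->|tn] := eqVneq t 0.
  by rewrite /normD expr0n /= mulr0 subr0 valX // valM //; lia.
have stn : s / t != 0 by rewrite mulf_neq0 ?invr_eq0.
have t2n : - t ^+ 2 != 0 by rewrite oppr_eq0 expf_neq0.
have [dn _] := defect_le (s / t); have := val_Delta_sub_sq_le stn.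
rewrite normD_Delta_sub_sq // (valM t2n dn) valN valX //.
by rewrite !valM ?invr_eq0 // valV //; val_lia.
Qed.

Variable pi : k.
Hypothesis pin : pi != 0.
Hypothesis vpi : v pi = 1.
Local Notation N := (qnorm pi Delta).

Lemma val_sub_pi_even x y : x != 0 -> y != 0 ->
  (exists e, v x = 2 * e) -> (exists e, v y = 2 * e) ->
  x - pi * y != 0 /\ v (x - pi * y) = Num.min (v x) (v y + 1).
Proof.
move=> xn yn [e he] [f hf]; have pyn : - (pi * y) != 0 by rewrite oppr_eq0 mulf_neq0.
have [-> ->] := val_add_neq xn pyn ltac:(rewrite valN valM // vpi; val_lia).
by rewrite valN valM // vpi addrC.
Qed.

Lemma qnorm_val_le z : q0 z != 0 -> N z != 0 /\ v (N z) <= 2 * v (2 * q0 z).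
Proof.
move=> zn; rewrite qnorm_split.
have xn := normD_neq0 (q2 z) zn; have le := normD_le (q2 z) zn.
have [->|yn] := eqVneq (normD Delta (q1 z) (q3 z)) 0.
  by rewrite mulr0 subr0.
have [-> ->] := val_sub_pi_even xn yn (normD_even xn) (normD_even yn).
by split=> //; val_lia.
Qed.

Lemma qnorm_val_ge m z : val_ge (2 * m) (N z) ->
  val_ge (2 * m) (normD Delta (q0 z) (q2 z)) /\
  val_ge (2 * m) (normD Delta (q1 z) (q3 z)).
Proof.
rewrite qnorm_split; set x := normD _ _ (q2 z); set y := normD _ _ (q3 z).
have [->|xn] := eqVneq x 0; have [->|yn] := eqVneq y 0.
- by split; left.
- rewrite sub0r => -[/eqP|h].
    by rewrite oppr_eq0 mulf_eq0 (negbTE pin) (negbTE yn).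
  have [e he] := normD_even yn; split; [by left | right].
  by move: h; rewrite valN valM // vpi he; val_lia.
- by rewrite mulr0 subr0 => h; split=> //; left.
have [sn hv] := val_sub_pi_even xn yn (normD_even xn) (normD_even yn).
case=> [/eqP|]; first by rewrite (negbTE sn).
by rewrite hv => h; have [e he] := normD_even yn; split; right; val_lia.
Qed.

Lemma pure_unit_shift (b c d : k) :
  N (Quat 0 b c d) != 0 -> v (N (Quat 0 b c d)) = 0 ->
  exists2 dl, val_ge 0 dl & val_ge 1 (N (Quat (- dl) b c d)).
Proof.
move=> an va.
have [hc hbd] := @qnorm_val_ge 0 (Quat 0 b c d) ltac:(by right; rewrite va).
have Dn : Delta != 0 by have [] := defect_le 0; rewrite expr0n /= subr0.
have ci : val_ge 0 c.
  have [->|cn] := eqVneq c 0; first by left.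
  move: hc; rewrite /normD /= expr0n /= sub0r => -[/eqP|h].
    by rewrite oppr_eq0 mulf_eq0 expf_eq0 (negbTE Dn) (negbTE cn).
  by move: h; rewrite valN valM ?expf_neq0 // vDelta valX // => h; right; val_lia.
have [x0 hx0] := defect_attained.
have x0i : val_ge 0 x0 by apply: Delta_sub_sq_integral; val_lia.
exists (c * x0); first exact: val_geM ci x0i.
have -> : N (Quat (- (c * x0)) b c d)
          = - (c ^+ 2 * (Delta - x0 ^+ 2)) - pi * normD Delta b d.
  by rewrite /qnorm /normD /=; ring.
apply: val_geD; apply: val_geN.
  apply: (@val_ge_le _ (0 + 0 + 2 * v 2)); first by val_lia.
  by rewrite expr2; apply: val_geM (val_geM ci ci) (or_intror hx0).
apply: (@val_ge_le _ (1 + 2 * 0)) => //.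
by apply: val_geM hbd; right; rewrite vpi.
Qed.

Lemma qtrace_inv_conjugate_val_ge (eta : quat k) (b c d : k) :
  let a := Quat 0 b c d in
  N eta != 0 -> v (N eta) = 1 -> N a != 0 -> v (N a) = 0 ->
  val_ge 1 (qtrace (qmul pi Delta
    (qscal 2 (qinv pi Delta (qmul pi Delta (qmul pi Delta eta a) (qconj eta)))) a)).
Proof.
move=> a en ve an va; have eta1 : val_ge 1 (N eta) by right; rewrite ve.
have [dl dli hA] := pure_unit_shift an va; set A := Quat (- dl) b c d in hA.
rewrite qtrace_scal2_qinv !qnormM qnorm_conj (q0_conjugate_shift _ _ _ _ _ _ dl) -/A.
set z := qmul pi Delta (qmul pi Delta (qmul pi Delta eta (qconj A)) (qconj eta)) A.
have hz : val_ge 2 (2 * q0 z).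
  have [->|zn] := eqVneq (q0 z) 0; first by left; rewrite mulr0.
  have [Nzn Nzle] := qnorm_val_le zn.
  have : val_ge 4 (N z).
    rewrite /z !qnormM !qnorm_conj.
    exact: val_geM (val_geM (val_geM eta1 hA) eta1) hA.
  by case=> [/eqP|h]; [rewrite (negbTE Nzn) | right; val_lia].
have hinv : val_ge (-2) ((N eta * N a * N eta)^-1).
  by right; rewrite valV ?mulf_neq0 // !valM ?mulf_neq0 // ve va.
rewrite mulrAC; apply: (@val_ge_le _ (3 + -2)) => //; apply: val_geM hinv.
rewrite mulrBr four_eq -mulrA; apply: val_geD.
  apply: (@val_ge_le _ (v 2 + 2)); first by val_lia.
  exact: val_geM (val_ge_val 2) hz.
apply: val_geN; apply: (@val_ge_le _ (v 2 + v 2 + (0 + 0 + 1))); first by val_lia.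
by rewrite expr2; apply: val_geM (val_geM (val_ge_val 2) (val_ge_val 2))
  (val_geM (val_geM dli dli) eta1).
Qed.

End NormForm.

Lemma unitOD_val (pi Delta : k) (a : quat k) : is_division pi Delta ->
  unitOD v pi Delta a -> qnorm pi Delta a != 0 /\ v (qnorm pi Delta a) = 0.
Proof.
move=> HD [a0 ha hai].
have an : qnorm pi Delta a != 0 by apply: contra_not_neq a0; apply: HD.
move: ha hai; rewrite /inOD qnorm_qinv /inO.
case=> [/eqP|h]; first by rewrite (negbTE an).
by case=> [/eqP|]; rewrite ?invr_eq0 (negbTE an) // valV //; split=> //; lia.
Qed.

End Valuation.

Theorem lemma5p7 (k : fieldType) (v : k -> int) (pi Delta : k)
  (Hk : dyadic_local_field v)
  (Hpi : pi != 0 /\ v pi = 1)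
  (HDelta : min_quad_defect_unit v Delta)
  (HD : is_division pi Delta)
  (eta a1 : quat k)
  (Heta : abs_eq v (qnorm pi Delta eta) (qnorm pi Delta (qi k)))
  (Ha1 : unitOD v pi Delta a1)
  (Ha1p : pure a1) :
  in_ideal v pi
    (qtrace (qmul pi Delta
       (qscal 2 (qinv pi Delta (qmul pi Delta (qmul pi Delta eta a1) (qconj eta))))
       a1)).
Proof.
case: Hk => vM [vU [val_surj [_ [_ [char0 val2]]]]]; case: Hpi => pin vpi.
case: HDelta => _ vDelta defect4; have n2 : (2 : k) != 0 := char0 1%N.
have [an va] := unitOD_val vM HD Ha1.
have a0 := q0_pure n2 Ha1p; case: a1 a0 an va {Ha1 Ha1p} => _ b c d /= -> an va.
have [en ve] : qnorm pi Delta eta != 0 /\ v (qnorm pi Delta eta) = 1.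
  move: Heta; rewrite /abs_eq qnorm_qi (valN vM) vpi => -[[_ /eqP]|[]] //.
  by rewrite oppr_eq0 (negbTE pin).
rewrite in_idealP // vpi.
apply: qtrace_inv_conjugate_val_ge => //.
- exact: min_quad_defect_le defect4.
- exact: min_quad_defect_attained defect4 val_surj.
Qed.
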